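(* There exists an absolute constant $C>0$ such that for every nonempty set $J$ of positive integers, $$\int_0^1\Big|\sum_{n\in J}\frac{1}{n^2}\cos nt\Big|\,{\rm d}t\ \ge\ C\Big(\sum_{n\in J}\frac1{n^2}\Big)^2.$$ *)

From Stdlib Require Import Reals ClassicalDescription.
Open Scope R_scope.

Definition Jcoef (J : nat -> Prop) (n : nat) : R :=
  if excluded_middle_informative (J n) then 1 / (INR n) ^ 2 else 0.

Definition Jterm (J : nat -> Prop) (t : R) (n : nat) : R :=
  Jcoef J n * cos (INR n * t).

(* Write S - f(t) = sum_{n in J} (1 - cos nt)/n^2.  A term is at most t^2/2 (as 1 - cos x <= x^2/2)
   and at most 2/n^2 <= 2/(n-1) - 2/n, so splitting the sum at n ~ 1/t gives S - f(t) <= 5t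
   for 0 < t <= 1.  Hence |f| >= S/2 on (0, S/10), an interval inside [0,1] because S <= 3,
   and the integral of |f| over [0,1] is at least S^2/20. *)

From Stdlib Require Import Reals ClassicalDescription Lra Lia.
Open Scope R_scope.

Lemma Rabs_sin_le (y : R) : Rabs (sin y) <= Rabs y.
Proof.
  assert (nonneg : forall x, 0 <= x -> Rabs (sin x) <= x).
  { intros x hx. apply Rabs_le. split.
    - destruct (Rle_lt_dec 1 x) as [h1|h1].
      + pose proof (SIN_bound x). lra.
      + assert (0 <= sin x) by (apply sin_ge_0; pose proof PI2_1; lra). lra.
    - destruct (Req_dec x 0) as [->|hx0].
      + rewrite sin_0. lra.
      + left. apply sin_lt_x. lra. }
  destruct (Rle_lt_dec 0 y) as [hy|hy].
  - rewrite (Rabs_right y) by lra. now apply nonneg.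
  - rewrite (Rabs_left y) by lra. rewrite <- Rabs_Ropp, <- sin_neg.
    apply nonneg. lra.
Qed.

Lemma one_minus_cos_le (x : R) : 1 - cos x <= x * x / 2.
Proof.
  replace x with (2 * (x / 2)) at 1 by field.
  rewrite cos_2a_sin.
  pose proof (Rsqr_le_abs_1 _ _ (Rabs_sin_le (x / 2))) as h.
  unfold Rsqr in h. lra.
Qed.

Lemma inv_sqr_bounds (n : nat) : 0 <= 1 / INR n ^ 2 <= 1.
Proof.
  destruct n as [|n].
  - simpl. rewrite Rmult_0_l, Rdiv_0_r. lra.
  - assert (1 <= INR (S n)) by (apply (le_INR 1); lia).
    split; [apply Rlt_le, Rdiv_lt_0_compat, pow_lt; lra|].
    unfold Rdiv. rewrite Rmult_1_l, <- Rinv_1. apply Rinv_le_contravar; [lra|]. nra.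
Qed.

Lemma inv_sqr_le_telescope (n : nat) :
  (2 <= n)%nat -> 1 / INR n ^ 2 <= 1 / (INR n - 1) - 1 / INR n.
Proof.
  intros hn. assert (1 < INR n) by (apply lt_1_INR; lia).
  replace (1 / (INR n - 1) - 1 / INR n) with (1 / (INR n * (INR n - 1))) by (field; lra).
  unfold Rdiv. rewrite !Rmult_1_l. apply Rinv_le_contravar; [nra|]. simpl. nra.
Qed.

(* At n = 0 the bound reads 1/0 = 0. *)
Lemma Jcoef_bounds (J : nat -> Prop) (n : nat) : 0 <= Jcoef J n <= 1 / INR n ^ 2.
Proof.
  pose proof (inv_sqr_bounds n).
  unfold Jcoef. destruct (excluded_middle_informative (J n)); lra.
Qed.

Lemma Un_cv_const (K : R) : Un_cv (fun _ => K) K.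
Proof.
  intros eps heps. exists 0%nat. intros n _.
  unfold Rdist. rewrite Rminus_diag, Rabs_R0. lra.
Qed.

Lemma infinite_sum_le (u : nat -> R) (l K : R) :
  infinite_sum u l -> (forall M, sum_f_R0 u M <= K) -> l <= K.
Proof. intros hu hK. exact (Rle_cv_lim hK hu (Un_cv_const K)). Qed.

Lemma infinite_sum_ge (u : nat -> R) (l K : R) :
  infinite_sum u l -> (forall M, K <= sum_f_R0 u M) -> K <= l.
Proof. intros hu hK. exact (Rle_cv_lim hK (Un_cv_const K) hu). Qed.

Lemma sum_f_R0_le_head_tail (u : nat -> R) (c K : R) (N M : nat) :
  (1 <= N)%nat -> 0 <= c -> 0 <= K ->
  (forall n, u n <= c) ->
  (forall n, (2 <= n)%nat -> u n <= K / (INR n - 1) - K / INR n) ->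
  sum_f_R0 u M <= INR (S N) * c + K / INR N.
Proof.
  intros hN hc hK hu_c hu_K.
  assert (head : forall m, sum_f_R0 u m <= INR (S m) * c).
  { induction m as [|m IH]; simpl sum_f_R0.
    - simpl. specialize (hu_c 0%nat). lra.
    - rewrite (S_INR (S m)). specialize (hu_c (S m)). lra. }
  assert (tail : forall k, sum_f_R0 u (N + k) <= sum_f_R0 u N + K / INR N - K / INR (N + k)).
  { induction k as [|k IH].
    - rewrite Nat.add_0_r. lra.
    - rewrite Nat.add_succ_r. simpl sum_f_R0.
      specialize (hu_K (S (N + k)) ltac:(lia)).
      rewrite S_INR in *. replace (INR (N + k) + 1 - 1) with (INR (N + k)) in hu_K by ring.
      lra. }
  assert (0 <= K / INR N).
  { apply Rle_mult_inv_pos; [lra|]. apply lt_0_INR. lia. }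
  destruct (Nat.le_gt_cases M N) as [hMN|hNM].
  - assert (INR (S M) <= INR (S N)) by (apply le_INR; lia).
    specialize (head M). nra.
  - replace M with (N + (M - N))%nat by lia.
    specialize (tail (M - N)%nat). specialize (head N).
    assert (0 <= K / INR (N + (M - N))).
    { apply Rle_mult_inv_pos; [lra|]. apply lt_0_INR. lia. }
    lra.
Qed.

Lemma exists_nat_mul_le_lt (t : R) :
  0 < t <= 1 -> exists N, (1 <= N)%nat /\ INR N * t <= 1 < INR (S N) * t.
Proof.
  intros ht.
  assert (crossing : forall k, 1 < INR k * t -> exists N, INR N * t <= 1 < INR (S N) * t).
  { induction k as [|k IH]; intros hk.
    - simpl in hk. lra.
    - destruct (Rle_lt_dec (INR k * t) 1) as [h|h]; [now exists k | now apply IH]. }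
  destruct (INR_unbounded (1 / t)) as [k hk].
  destruct (crossing k) as [N hN].
  { apply Rmult_gt_compat_r with (r := t) in hk; [|lra].
    replace (1 / t * t) with 1 in hk by (field; lra). lra. }
  exists N. split; [|exact hN].
  destruct N; [simpl in hN; lra | lia].
Qed.

Section CosineSeries.

Variable a : nat -> R.
Hypothesis a_bounds : forall n, 0 <= a n <= 1 / INR n ^ 2.

Definition cos_gap (t : R) (n : nat) : R := a n * (1 - cos (INR n * t)).

Lemma cos_gap_le_sqr (t : R) (n : nat) : cos_gap t n <= t * t / 2.
Proof.
  unfold cos_gap. destruct (a_bounds n) as [a0 a1].
  pose proof (COS_bound (INR n * t)). pose proof (one_minus_cos_le (INR n * t)).
  destruct n as [|n].
  - simpl. rewrite Rmult_0_l, cos_0. nra.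
  - assert (0 < INR (S n)) by (apply lt_0_INR; lia).
    apply Rle_trans with (1 / INR (S n) ^ 2 * (INR (S n) * t * (INR (S n) * t) / 2)).
    + apply Rmult_le_compat; lra.
    + right. field. lra.
Qed.

Lemma cos_gap_le_telescope (t : R) (n : nat) :
  (2 <= n)%nat -> cos_gap t n <= 2 / (INR n - 1) - 2 / INR n.
Proof.
  intros hn. unfold cos_gap. destruct (a_bounds n) as [a0 a1].
  pose proof (COS_bound (INR n * t)). pose proof (inv_sqr_le_telescope n hn).
  assert (1 < INR n) by (apply lt_1_INR; lia).
  replace (2 / (INR n - 1) - 2 / INR n) with (2 * (1 / (INR n - 1) - 1 / INR n))
    by (field; lra).
  nra.
Qed.

Lemma sum_cos_gap_le (t : R) (M : nat) : 0 < t <= 1 -> sum_f_R0 (cos_gap t) M <= 5 * t.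
Proof.
  intros ht. destruct (exists_nat_mul_le_lt t ht) as [N [hN [hNt hSNt]]].
  rewrite S_INR in hSNt. assert (1 <= INR N) by (apply (le_INR 1); lia).
  assert (head : INR (S N) * (t * t / 2) <= t) by (rewrite S_INR; nra).
  assert (tail : 2 / INR N <= 4 * t).
  { apply Rmult_le_reg_r with (INR N); [lra|].
    unfold Rdiv. rewrite Rmult_assoc, Rinv_l by lra. nra. }
  pose proof (sum_f_R0_le_head_tail (cos_gap t) (t * t / 2) 2 N M hN
    ltac:(nra) ltac:(lra) (cos_gap_le_sqr t) (cos_gap_le_telescope t)).
  lra.
Qed.

Lemma infinite_sum_bounds (S : R) : infinite_sum a S -> 0 <= S <= 3.
Proof.
  intros hS. split.
  - apply (infinite_sum_ge a S 0 hS). intros M.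
    apply cond_pos_sum. intros n. apply a_bounds.
  - apply (infinite_sum_le a S 3 hS). intros M.
    assert (3 = INR 2 * 1 + 1 / INR 1) as -> by (simpl; field).
    apply sum_f_R0_le_head_tail; try lra; try lia.
    + intros n. destruct (a_bounds n). pose proof (inv_sqr_bounds n). lra.
    + intros n hn. destruct (a_bounds n). pose proof (inv_sqr_le_telescope n hn). lra.
Qed.

Lemma cosine_series_ge (S t ft : R) :
  infinite_sum a S -> infinite_sum (fun n => a n * cos (INR n * t)) ft ->
  0 < t <= 1 -> S - 5 * t <= ft.
Proof.
  intros hS hf ht.
  assert (S - ft <= 5 * t).
  { apply (infinite_sum_le (cos_gap t)).
    - intros eps heps. destruct (CV_minus _ _ _ _ hS hf eps heps) as [N hN].
      exists N. intros n hn.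
      rewrite <- (sum_eq (fun i => a i - a i * cos (INR i * t))), minus_sum; [now apply hN|].
      intros i _. unfold cos_gap. ring.
    - intros M. now apply sum_cos_gap_le. }
  lra.
Qed.

End CosineSeries.

Lemma RiemannInt_ge_initial_segment (g : R -> R) (a c b m : R)
  (pr : Riemann_integrable g a b) :
  a <= c <= b -> (forall x, 0 <= g x) -> (forall x, a < x < c -> m <= g x) ->
  m * (c - a) <= RiemannInt pr.
Proof.
  intros hc hg_nonneg hg_m.
  pose (pr_ac := RiemannInt_P22 pr hc). pose (pr_cb := RiemannInt_P23 pr hc).
  rewrite <- (RiemannInt_P26 pr_ac pr_cb pr).
  assert (m * (c - a) <= RiemannInt pr_ac).
  { rewrite <- (RiemannInt_P15 (RiemannInt_P14 a c m)).
    apply RiemannInt_P19; [lra | exact hg_m]. }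
  assert (0 <= RiemannInt pr_cb).
  { replace 0 with (0 * (b - c)) by ring.
    rewrite <- (RiemannInt_P15 (RiemannInt_P14 c b 0)).
    apply RiemannInt_P19; [lra|]. intros x _. apply hg_nonneg. }
  lra.
Qed.

Theorem mainTheorem11 :
  exists C : R, 0 < C /\
    forall (J : nat -> Prop),
      (forall n, J n -> (0 < n)%nat) ->
      (exists n, J n) ->
      forall (S : R) (f : R -> R),
        infinite_sum (Jcoef J) S ->
        (forall t, infinite_sum (Jterm J t) (f t)) ->
        forall pr : Riemann_integrable (fun t => Rabs (f t)) 0 1,
          RiemannInt pr >= C * S ^ 2.
Proof.
  exists (1 / 20). split; [lra|].
  intros J _ _ S f hS hf pr.
  destruct (infinite_sum_bounds _ (Jcoef_bounds J) S hS) as [S0 S3].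
  apply Rle_ge. replace (1 / 20 * S ^ 2) with (S / 2 * (S / 10 - 0)) by field.
  apply RiemannInt_ge_initial_segment; [lra | intros; apply Rabs_pos |].
  intros t ht.
  pose proof (cosine_series_ge _ (Jcoef_bounds J) S t (f t) hS (hf t) ltac:(lra)).
  pose proof (Rle_abs (f t)). lra.
Qed.
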